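(* Assume the PACE setting below. Then \[ \mathbb{E}\,\tilde{\delta}(\hat C, C) \le \frac{T}{\tau n^2}\,\mathbb{E}\|\hat C^{(S)} - C^{(S)}\|_F^2 + \pi_{\max}\,\max_{i,j}\mathbb{P}(N_{ij}<\tau), \] and moreover \[ \mathbb{E}\|\hat C^{(S)} - C^{(S)}\|_F^2 \le n^2\,\mathbb{P}(|S|<m_\star) + 4\,\mathbb{E}\big[|S|^2\,\delta(\hat Z_S, Z_S)\,\mathbf 1\{|S|\ge m_\star\}\big]. \]
   Context: PACE setting. Nodes are $[n]=\{1,\dots,n\}$; $Z\in\{0,1\}^{n\times K}$ is a fixed (true) cluster membership matrix (each row has exactly one $1$), $C=ZZ^\top$, $n_k$ is the number of nodes in cluster $k$, $\pi_k=n_k/n$, $\pi_{\max}=\max_k\pi_k$. Fix integers $m_\star\ge1$, $T\ge1$ and a real $\tau>0$. Random node subsets $S_1,\dots,S_T\subseteq[n]$ are chosen (jointly with a random network) by some sampling scheme. For a subset $S$, $C^{(S)}$ denotes the $n\times n$ matrix with $C^{(S)}_{ij}=C_{ij}$ if $i,j\in S$ and $0$ otherwise. For each $\ell$, $\hat C^{(\ell)}$ is a random $n\times n$ matrix vanishing outside $S_\ell\times S_\ell$: if $|S_\ell|\ge m_\star$ then $\hat C^{(\ell)}$ is the zero-extension of $\hat Z_{S_\ell}\hat Z_{S_\ell}^\top$, where $\hat Z_{S_\ell}\in\{0,1\}^{|S_\ell|\times K}$ is a cluster membership matrix output by some clustering algorithm on the subgraph induced by $S_\ell$; if $|S_\ell|<m_\star$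 then $\hat C^{(\ell)}=0$. It is assumed that the pairs $(S_\ell,\hat C^{(\ell)})$, $\ell=1,\dots,T$, are identically distributed, each with the distribution of a generic pair $(S,\hat C^{(S)})$ (with corresponding $\hat Z_S$). Let $y^{(\ell)}_{ij}=\mathbf 1\{i\in S_\ell, j\in S_\ell\}$, $N_{ij}=\sum_{\ell=1}^T y^{(\ell)}_{ij}$, and define the PACE estimator $\hat C_{ij} = \mathbf 1\{N_{ij}\ge\tau\}\,\frac{\sum_{\ell=1}^T y^{(\ell)}_{ij}\hat C^{(\ell)}_{ij}}{N_{ij}}$ (taken to be $0$ when $N_{ij}<\tau$). $Z_S\in\{0,1\}^{|S|\times K}$ is the submatrix of $Z$ with rows in $S$; $\delta(\hat Z_S,Z_S)=\min_Q \frac{1}{|S|}\|\hat Z_SQ-Z_S\|_0$ over $K\times K$ permutation matrices $Q$ ($\|\cdot\|_0$ counts nonzero entries); $\tilde\delta(\hat C,C)=\frac1{n^2}\|\hat C-C\|_F^2$. Expectations are over all randomness (network and sampling). *)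

From HB Require Import structures.
From mathcomp Require Import all_boot all_order all_algebra all_fingroup.
Set Implicit Arguments. Unset Strict Implicit. Unset Printing Implicit Defensive.
Import Order.TTheory GRing.Theory Num.Theory.
Local Open Scope ring_scope.

Section PACE.
Variable R : realFieldType.

Definition memb n K (z : 'I_n -> 'I_K) : 'M[R]_(n, K) :=
  \matrix_(i, k) (z i == k)%:R.

Definition coclust n K (z : 'I_n -> 'I_K) : 'M[R]_n :=
  memb z *m (memb z)^T.

Definition restr n (S : {set 'I_n}) (M : 'M[R]_n) : 'M[R]_n :=
  \matrix_(i, j) (if (i \in S) && (j \in S) then M i j else 0).

(* hat C^(S): zero-extension of hatZ_S hatZ_S^T if |S| >= m_star, else 0.
   hatZ_S is encoded by a labelling zh whose values on S give the rows of hatZ_S. *)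
Definition chat n K (mstar : nat) (S : {set 'I_n}) (zh : 'I_n -> 'I_K) : 'M[R]_n :=
  if (mstar <= #|S|)%N then restr S (coclust zh) else 0.

Definition frob2 n (A : 'M[R]_n) : R := \sum_i \sum_j (A i j) ^+ 2.

(* delta(hatZ_S, Z_S) = min_Q (1/|S|) || hatZ_S Q - Z_S ||_0,
   rows of the n x K matrices restricted to S (i.e. the |S| x K submatrices) *)
Definition l0_rows n K (S : {set 'I_n}) (M : 'M[R]_(n, K)) : nat :=
  #|[set ik : 'I_n * 'I_K | (ik.1 \in S) && (M ik.1 ik.2 != 0)]|.

Definition delta n K (S : {set 'I_n}) (zh z : 'I_n -> 'I_K) : R :=
  let f (s : 'S_K) := (#|S|%:R)^-1 * (l0_rows S (memb zh *m perm_mx s - memb z))%:R in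
  \big[Order.min/f 1%g]_(s : 'S_K) f s.

Definition Expect (Omega : finType) (P : Omega -> R) (X : Omega -> R) : R :=
  \sum_w P w * X w.
Definition Prob (Omega : finType) (P : Omega -> R) (E : pred Omega) : R :=
  \sum_(w | E w) P w.

Definition is_prob (Omega : finType) (P : Omega -> R) : Prop :=
  (forall w, 0 <= P w) /\ \sum_w P w = 1.

Definition Ncount n T (S : 'I_T -> {set 'I_n}) (i j : 'I_n) : R :=
  \sum_(l < T) ((i \in S l) && (j \in S l))%:R.

Definition pace n K T (mstar : nat) (tau : R) (S : 'I_T -> {set 'I_n})
    (zh : 'I_T -> 'I_n -> 'I_K) : 'M[R]_n :=
  \matrix_(i, j)
    (if tau <= Ncount S i j then
       (\sum_(l < T) ((i \in S l) && (j \in S l))%:R * chat mstar (S l) (zh l) i j)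
         / Ncount S i j
     else 0).

Definition tdelta n (A B : 'M[R]_n) : R := (n%:R ^+ 2)^-1 * frob2 (A - B).

Definition pimax n K (z : 'I_n -> 'I_K) : R :=
  \big[Num.max/0]_(k : 'I_K) (#|[set i | z i == k]|%:R / n%:R).

End PACE.

Arguments chat {R n K} mstar S zh.
Arguments restr {R n} S M.
Arguments frob2 {R n} A.
Arguments delta {R n K} S zh z.
Arguments Expect {R Omega} P X.
Arguments Prob {R Omega} P E.
Arguments is_prob {R Omega} P.
Arguments Ncount {R n T} S i j.
Arguments pace {R n K T} mstar tau S zh.
Arguments tdelta {R n} A B.
Arguments coclust R {n K} z.
Arguments pimax R {n K} z.

(* Where N_ij >= tau, the PACE entry is the average of the patch estimates
   over the patches containing i and j, so by Jensen's inequality its squared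
   error is at most (1/tau) times the sum of the patch squared errors; taking
   expectations, each patch contributes E||C^(S) - C^(S)||_F^2 because the
   patches are identically distributed.  Where N_ij < tau the entry is 0, the
   error is C_ij, and each row of C has at most n pi_max ones.
   For the patch error, a patch of size < m_star costs at most n^2; otherwise,
   if the estimated labels agree with the true ones up to a permutation except
   on a set D of nodes, only the entries in a row or column of D can be wrong,
   which gives at most 2 |S| |D| <= 4 |S|^2 delta. *)
From HB Require Import structures.
From mathcomp Require Import all_boot all_order all_algebra all_fingroup.
From mathcomp Require Import ring lra.
Set Implicit Arguments.
Unset Strict Implicit.
Unset Printing Implicit Defensive.
Import Order.TTheory GRing.Theory Num.Theory.
Local Open Scope ring_scope.

Section Pace.
Variable R : realFieldType.

Lemma sum_mem_card n (A : {set 'I_n}) : \sum_j ((j \in A)%:R : R) = #|A|%:R.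
Proof.
rewrite -sum1_card natr_sum [RHS]big_mkcond /=; apply: eq_bigr => j _.
by case: (j \in A).
Qed.

Lemma sum_mem_mul_card n (A B : {set 'I_n}) :
  \sum_i \sum_j ((i \in A)%:R * (j \in B)%:R : R) = #|A|%:R * #|B|%:R.
Proof.
rewrite -sum_mem_card mulr_suml; apply: eq_bigr => i _.
by rewrite -sum_mem_card mulr_sumr.
Qed.

Lemma weighted_mean_sqr_le (I : finType) (y a : I -> R) :
  (forall l, 0 <= y l) -> 0 < \sum_l y l ->
  ((\sum_l y l * a l) / \sum_l y l) ^+ 2 <= (\sum_l y l * a l ^+ 2) / \sum_l y l.
Proof.
move=> y_ge0 N_gt0; set N := \sum_l y l; set m := (\sum_l y l * a l) / N.
have var_ge0 : 0 <= \sum_l y l * (a l - m) ^+ 2.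
  by apply: sumr_ge0 => l _; rewrite mulr_ge0 ?sqr_ge0.
have varE : \sum_l y l * (a l - m) ^+ 2 =
    \sum_l y l * a l ^+ 2 - 2 * m * \sum_l y l * a l + m ^+ 2 * N.
  rewrite /N !mulr_sumr -sumrB -big_split /=; apply: eq_bigr => l _.
  by rewrite sqrrB; ring.
have meanE : \sum_l y l * a l = m * N by rewrite /m divfK // gt_eqF.
rewrite ler_pdivlMr //; move: var_ge0; rewrite varE meanE; lra.
Qed.

Lemma coclustE n K (z : 'I_n -> 'I_K) i j : coclust R z i j = (z i == z j)%:R.
Proof.
rewrite !mxE (bigD1 (z i)) //= !mxE eqxx mul1r big1 ?addr0; first by rewrite eq_sym.
by move=> k hk; rewrite !mxE eq_sym (negbTE hk) mul0r.
Qed.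

Lemma mxBE m n (A B : 'M[R]_(m, n)) i j : (A - B) i j = A i j - B i j.
Proof. by rewrite !mxE. Qed.

Lemma restrE n (S : {set 'I_n}) (M : 'M[R]_n) i j :
  restr S M i j = if (i \in S) && (j \in S) then M i j else 0.
Proof. exact: mxE. Qed.

Lemma coclust_perm n K (z : 'I_n -> 'I_K) (s : 'S_K) :
  coclust R (fun i => s (z i)) = coclust R z.
Proof. by apply/matrixP => i j; rewrite !coclustE (inj_eq perm_inj). Qed.

Lemma card_misclassified_le_l0_rows n K (S : {set 'I_n}) (zh z : 'I_n -> 'I_K)
    (s : 'S_K) :
  (#|[set i in S | s (zh i) != z i]| <= l0_rows S (memb R zh *m perm_mx s - memb R z))%N.
Proof.
rewrite /l0_rows -(card_imset _ (f := fun i => (i, z i))); last by move=> a b [].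
apply: subset_leq_card; apply/subsetP => _ /imsetP [i + ->].
rewrite !inE /= => /andP [-> zhi]; rewrite -{1}(invgK s) -col_permE !mxE eqxx.
have -> : (zh i == s^-1%g (z i)) = false.
  by apply: negbTE; apply: contra zhi => /eqP ->; rewrite permKV.
by rewrite sub0r oppr_eq0 oner_eq0.
Qed.

Lemma frob2_restr_coclust_le n K (S : {set 'I_n}) (zh z : 'I_n -> 'I_K) :
  frob2 (restr S (coclust R zh) - restr S (coclust R z))
    <= 2 * #|S|%:R * #|[set i in S | zh i != z i]|%:R.
Proof.
set D := [set i in S | zh i != z i].
apply: (@le_trans _ _ (\sum_i \sum_j
    ((i \in D)%:R * (j \in S)%:R + (i \in S)%:R * (j \in D)%:R))); last first.
  rewrite (eq_bigr _ (fun i _ => big_split _ _ _ _ _)) big_split /=.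
  by rewrite !sum_mem_mul_card; lra.
apply: ler_sum => i _; apply: ler_sum => j _.
rewrite mxBE !restrE !coclustE !inE.
case: (i \in S) (j \in S) => [] [] /=;
  rewrite ?subrr ?expr0n ?mulr1 ?mul1r ?mulr0 ?mul0r ?addr0 //.
have sqr_le1 (b1 b2 : bool) : ((b1%:R - b2%:R) ^+ 2 : R) <= 1.
  by case: b1 b2 => [] []; rewrite /= ?subrr ?subr0 ?sub0r ?sqrrN ?expr1n ?expr0n ?ler01.
(* two correctly labelled nodes are co-clustered by [zh] iff they are by [z] *)
case: (eqVneq (zh i) (z i)) => [zhi|_] /=; last by rewrite (le_trans (sqr_le1 _ _)) // lerDl.
case: (eqVneq (zh j) (z j)) => [zhj|_] /=; last by rewrite (le_trans (sqr_le1 _ _)) // lerDr.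
by rewrite zhi zhj subrr expr0n addr0.
Qed.

Lemma frob2_restr_coclust_le_delta n K (S : {set 'I_n}) (zh z : 'I_n -> 'I_K) :
  (0 < #|S|)%N ->
  frob2 (restr S (coclust R zh) - restr S (coclust R z))
    <= 4 * (#|S|%:R ^+ 2 * delta S zh z).
Proof.
move=> S_gt0; have S_neq0 : (#|S|%:R : R) != 0 by rewrite pnatr_eq0 -lt0n.
set F := frob2 _.
have le_perm (s : 'S_K) : F <= 4 * (#|S|%:R ^+ 2 *
    ((#|S|%:R)^-1 * (l0_rows S (memb R zh *m perm_mx s - memb R z))%:R)).
  rewrite /F -(coclust_perm zh s) expr2 -mulrA mulVKf //.
  apply: le_trans (frob2_restr_coclust_le _ _ _) _.
  have := card_misclassified_le_l0_rows S zh z s; rewrite -(ler_nat R) => le_l0.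
  have S_ge0 : (0 : R) <= #|S|%:R by [].
  set d := #|_|%:R in le_l0 *; set l := _%:R in le_l0 *.
  have l_ge0 : 0 <= l by []; nra.
rewrite /delta; apply: (big_ind (fun x => F <= 4 * (#|S|%:R ^+ 2 * x))) => // x y Fx Fy.
by rewrite /Order.min; case: ifP.
Qed.

Lemma frob2_chat_le n K mstar (S : {set 'I_n}) (zh z : 'I_n -> 'I_K) :
  (1 <= mstar)%N ->
  frob2 (chat mstar S zh - restr S (coclust R z)) <=
  n%:R ^+ 2 * ((#|S| < mstar)%N)%:R
  + 4 * (#|S|%:R ^+ 2 * delta S zh z * ((mstar <= #|S|)%N)%:R).
Proof.
move=> mstar_gt0; rewrite /chat; case: leqP => [le_mS|lt_Sm] /=.
  rewrite mulr0 add0r mulr1; apply: frob2_restr_coclust_le_delta.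
  exact: leq_trans le_mS.
rewrite mulr1 mulr0 mulr0 addr0 sub0r.
apply: (@le_trans _ _ (\sum_(i < n) \sum_(j < n) (1 : R))).
  apply: ler_sum => i _; apply: ler_sum => j _.
  rewrite mxE sqrrN restrE coclustE.
  by case: (_ && _); case: (z i == z j); rewrite ?expr1n ?expr0n ?ler01.
by rewrite !sumr_const card_ord expr2 mulr_natr.
Qed.

Lemma pace_entry_sqr_le n K T mstar tau (S : 'I_T -> {set 'I_n})
    (zh : 'I_T -> 'I_n -> 'I_K) (z : 'I_n -> 'I_K) i j :
  0 < tau ->
  (pace mstar tau S zh i j - coclust R z i j) ^+ 2 <=
  tau^-1 * \sum_l (chat mstar (S l) (zh l) - restr (S l) (coclust R z)) i j ^+ 2
  + coclust R z i j ^+ 2 * (Ncount S i j < tau)%R%:R.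
Proof.
move=> tau_gt0; set c := coclust R z i j; set N := Ncount S i j.
have sum_ge0 : 0 <= tau^-1 * \sum_l
    (chat mstar (S l) (zh l) - restr (S l) (coclust R z)) i j ^+ 2.
  apply: mulr_ge0; first by rewrite invr_ge0 ltW.
  by apply: sumr_ge0 => l _; exact: sqr_ge0.
rewrite mxE -/N; case: lerP => [le_tauN|lt_Ntau] /=; last first.
  by rewrite mulr1 sub0r sqrrN lerDr.
rewrite mulr0 addr0.
pose y l : R := ((i \in S l) && (j \in S l))%:R.
pose a l := chat mstar (S l) (zh l) i j - c.
have N_gt0 : 0 < N by apply: lt_le_trans le_tauN.
have NE : N = \sum_l y l by [].
have meanE : (\sum_l y l * chat mstar (S l) (zh l) i j) / N - c
    = (\sum_l y l * a l) / \sum_l y l.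
  rewrite -NE -[c](mulfK (lt0r_neq0 N_gt0)) -mulrBl; congr (_ / _).
  by rewrite NE mulr_sumr -sumrB; apply: eq_bigr => l _; rewrite /a; ring.
have y_ge0 l : 0 <= y l by [].
rewrite meanE -NE; apply: le_trans (weighted_mean_sqr_le a y_ge0 _) _; first by rewrite -NE.
apply: (@le_trans _ _ ((\sum_l y l * a l ^+ 2) / tau)).
  apply: ler_wpM2l; last by rewrite lef_pV2.
  by apply: sumr_ge0 => l _; rewrite mulr_ge0 ?sqr_ge0.
rewrite mulrC [in leRHS]mulr_sumr mulr_sumr; apply: ler_sum => l _.
apply: ler_wpM2l; first by rewrite invr_ge0 ltW.
rewrite mxBE restrE /y /a -/c; case: (_ && _); first by rewrite mul1r.
by rewrite mul0r sqr_ge0.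
Qed.

Lemma tdelta_pace_le n K T mstar tau (S : 'I_T -> {set 'I_n})
    (zh : 'I_T -> 'I_n -> 'I_K) (z : 'I_n -> 'I_K) :
  0 < tau ->
  tdelta (pace mstar tau S zh) (coclust R z) <=
  (tau * n%:R ^+ 2)^-1 * \sum_l frob2 (chat mstar (S l) (zh l) - restr (S l) (coclust R z))
  + (n%:R ^+ 2)^-1 * \sum_i \sum_j coclust R z i j ^+ 2 * (Ncount S i j < tau)%R%:R.
Proof.
move=> tau_gt0; rewrite /tdelta (invfM tau) [tau^-1 * _]mulrC -mulrA -mulrDr.
apply: ler_wpM2l; first by rewrite invr_ge0 exprn_ge0.
rewrite /frob2 [X in tau^-1 * X]exchange_big /=.
under [X in tau^-1 * X]eq_bigr do rewrite exchange_big.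
rewrite mulr_sumr -big_split; apply: ler_sum => i _.
rewrite mulr_sumr -big_split; apply: ler_sum => j _.
by rewrite mxBE; apply: pace_entry_sqr_le.
Qed.

Lemma coclust_weighted_mean_le n K (z : 'I_n -> 'I_K) (p : 'I_n -> 'I_n -> R) :
  (forall i j, 0 <= p i j) ->
  (n%:R ^+ 2)^-1 * \sum_i \sum_j coclust R z i j ^+ 2 * p i j
    <= pimax R z * \big[Num.max/0]_i \big[Num.max/0]_j p i j.
Proof.
case: n z p => [|n] z p p_ge0.
  by rewrite big_ord0 mulr0 mulr_ge0 ?bigmax_ge_id.
set M := \big[Num.max/0]_i _.
have p_le i j : p i j <= M.
  exact: le_trans (le_bigmax _ (fun j => p i j) j) (le_bigmax _ _ i).
have cluster_le i : (#|[set j | z j == z i]|%:R : R) <= n.+1%:R * pimax R z.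
  rewrite -ler_pdivrMl ?ltr0Sn // mulrC.
  exact: (le_bigmax _ (fun k => #|[set j | z j == k]|%:R / n.+1%:R) (z i)).
have row_le i : \sum_j coclust R z i j ^+ 2 * p i j <= n.+1%:R * pimax R z * M.
  apply: le_trans (ler_wpM2r (bigmax_ge_id _ _ _ _) (cluster_le i)).
  rewrite mulrC -sum_mem_card mulr_sumr; apply: ler_sum => j _.
  rewrite coclustE inE eq_sym; case: (z j == z i); last by rewrite expr0n mul0r mulr0.
  by rewrite expr1n mul1r mulr1.
apply: le_trans (ler_wpM2l _ (ler_sum _ (fun i _ => row_le i))) _.
  by rewrite invr_ge0 exprn_ge0.
rewrite sumr_const card_ord -[(_ * M) *+ _]mulr_natl -[_ * pimax R z * M]mulrA.
by rewrite (mulrA n.+1%:R n.+1%:R) -expr2 mulKf // expf_neq0 // pnatr_eq0.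
Qed.

Section Expectation.
Variables (Omega : finType) (P : Omega -> R).

Lemma ExpectD (X Y : Omega -> R) :
  Expect P (fun w => X w + Y w) = Expect P X + Expect P Y.
Proof. by rewrite /Expect -big_split; apply: eq_bigr => w _; rewrite mulrDr. Qed.

Lemma ExpectZl a (X : Omega -> R) : Expect P (fun w => a * X w) = a * Expect P X.
Proof. by rewrite /Expect mulr_sumr; apply: eq_bigr => w _; rewrite mulrCA. Qed.

Lemma Expect_sum (I : finType) (X : I -> Omega -> R) :
  Expect P (fun w => \sum_i X i w) = \sum_i Expect P (X i).
Proof. by rewrite /Expect exchange_big; apply: eq_bigr => w _; rewrite mulr_sumr. Qed.

Lemma Expect_indicator (E : pred Omega) : Expect P (fun w => (E w)%:R) = Prob P E.
Proof.
rewrite /Prob big_mkcond; apply: eq_bigr => w _.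
by case: (E w); rewrite ?mulr1 ?mulr0.
Qed.

Lemma ler_Expect (X Y : Omega -> R) :
  is_prob P -> (forall w, X w <= Y w) -> Expect P X <= Expect P Y.
Proof. by move=> [P_ge0 _] le_XY; apply: ler_sum => w _; apply: ler_wpM2l. Qed.

Lemma Expect_comp (V : eqType) (X : Omega -> V) (G : V -> R) (s : seq V) :
  uniq s -> (forall w, X w \in s) ->
  Expect P (fun w => G (X w)) = \sum_(v <- s) G v * Prob P (fun w => X w == v).
Proof.
move=> s_uniq Xs; rewrite /Expect.
under [RHS]eq_bigr => v _ do rewrite -Expect_indicator -ExpectZl.
rewrite /Expect exchange_big; apply: eq_bigr => w _.
rewrite -mulr_sumr (bigD1_seq (X w)) //= eqxx mulr1 big1_seq ?addr0 // => v.
by case/andP=> /negbTE; rewrite eq_sym => ->; rewrite mulr0.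
Qed.

Lemma Expect_eq_distr (V : eqType) (X Y : Omega -> V) (G : V -> R) :
  (forall v, Prob P (fun w => X w == v) = Prob P (fun w => Y w == v)) ->
  Expect P (fun w => G (X w)) = Expect P (fun w => G (Y w)).
Proof.
move=> XY; set s := undup ([seq X w | w <- enum Omega] ++ [seq Y w | w <- enum Omega]).
have Xs w : X w \in s by rewrite mem_undup mem_cat map_f ?mem_enum.
have Ys w : Y w \in s by rewrite mem_undup mem_cat orbC map_f ?mem_enum.
rewrite (Expect_comp G (undup_uniq _) Xs) (Expect_comp G (undup_uniq _) Ys).
by apply: eq_bigr => v _; rewrite XY.
Qed.

End Expectation.

End Pace.

Theorem mainTheorem2 (R : realFieldType) (n K : nat) (z : 'I_n -> 'I_K)
  (mstar T : nat) (tau : R)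
  (Omega : finType) (P : Omega -> R)
  (S : 'I_T -> Omega -> {set 'I_n}) (zh : 'I_T -> Omega -> 'I_n -> 'I_K)
  (S0 : Omega -> {set 'I_n}) (zh0 : Omega -> 'I_n -> 'I_K) :
  (1 <= mstar)%N -> (1 <= T)%N -> 0 < tau ->
  is_prob P ->
  (forall (l : 'I_T) (A : {set 'I_n}) (B : 'M[R]_n),
     Prob P (fun w => (S l w == A) && (chat mstar (S l w) (zh l w) == B)) =
     Prob P (fun w => (S0 w == A) && (chat mstar (S0 w) (zh0 w) == B))) ->
  let C := coclust R z in
  let EF := Expect P (fun w =>
              frob2 (chat mstar (S0 w) (zh0 w) - restr (S0 w) C)) in
  Expect P (fun w => tdelta (pace mstar tau (fun l => S l w) (fun l => zh l w)) C)
    <= T%:R / (tau * n%:R ^+ 2) * EF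
       + pimax R z * \big[Num.max/0]_(i : 'I_n) \big[Num.max/0]_(j : 'I_n)
                      Prob P (fun w => Ncount (fun l => S l w) i j < tau)
  /\
  EF <= n%:R ^+ 2 * Prob P (fun w => (#|S0 w| < mstar)%N)
        + 4 * Expect P (fun w => #|S0 w|%:R ^+ 2 * delta (S0 w) (zh0 w) z
                                  * ((mstar <= #|S0 w|)%N)%:R).
Proof.
move=> mstar_gt0 _ tau_gt0 P_prob same_distr C EF; split.
  apply: le_trans (ler_Expect P_prob (fun w => tdelta_pace_le _ _ _ _ tau_gt0)) _.
  have EF_l l : Expect P (fun w =>
      frob2 (chat mstar (S l w) (zh l w) - restr (S l w) C)) = EF.
    apply: (Expect_eq_distr (X := fun w => (S l w, chat mstar (S l w) (zh l w)))
      (Y := fun w => (S0 w, chat mstar (S0 w) (zh0 w)))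
      (fun p => frob2 (p.2 - restr p.1 C))).
    move=> [A B]; exact: same_distr.
  rewrite ExpectD !ExpectZl !Expect_sum (eq_bigr _ (fun l _ => EF_l l)) sumr_const card_ord.
  under eq_bigr do rewrite Expect_sum; under eq_bigr do under eq_bigr do
    rewrite ExpectZl Expect_indicator.
  apply: lerD; first by rewrite -[EF *+ _]mulr_natl mulrCA mulrA.
  apply: coclust_weighted_mean_le => i j.
  by apply: sumr_ge0 => w _; exact: P_prob.1.
apply: le_trans (ler_Expect P_prob (fun w => frob2_chat_le _ (S0 w) (zh0 w) z mstar_gt0)) _.
by rewrite ExpectD !ExpectZl Expect_indicator.
Qed.
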